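(* Let $\mathcal{H}=\bigotimes_{a=1}^N\mathcal{H}_a$ be finite-dimensional, $\mathcal{N}=\{\mathcal{N}_k\}$ a non-trivial neighborhood structure, and $\Phi_{\mathcal{N}}$ the quasi-local projector defined below. For any $\rho,\sigma\in\mathcal{D}(\mathcal{H})$, one has $\rho_{\mathcal{N}_k}=\sigma_{\mathcal{N}_k}$ for all $\mathcal{N}_k\in\mathcal{N}$ if and only if $\Phi_{\mathcal{N}}(\sigma)=\Phi_{\mathcal{N}}(\rho)$.
   Context: $\mathcal{D}(\mathcal{H})$ is the set of density operators; $\mathcal{B}(\mathcal{H})$ the space of linear operators. A neighborhood is $\mathcal{N}_k\subsetneq\{1,\dots,N\}$ with complement $\overline{\mathcal{N}}_k$; a neighborhood structure is a finite collection of neighborhoods, non-trivial if every index lies in some neighborhood and each neighborhood intersects another. $\rho_{\mathcal{N}_k}=\mathrm{tr}_{\overline{\mathcal{N}}_k}\rho$. For each $a$ fix an orthonormal (Hilbert–Schmidt) basis of Hermitian operators on $\mathcal{H}_a$ consisting of the (normalized) identity $I_a$ and traceless Hermitian operators $X^a_{i_a}$, $i_a=1,\dots,d_a^2-1$; let $\mathcal{X}$ be the orthonormal product basis of $\mathcal{B}(\mathcal{H})$ formed by all $N$-fold tensor products. For $X_i\in\mathcal{X}$ let $\Phi_{X_i}(M)=\mathrm{tr}(X_iM)X_i$. Let $\mathcal{X}_{\mathcal{N}_k}$ be the set of $X_i\in\mathcal{X}$ of the form $X^i_{\mathcal{N}_k}\otimes I_{\overline{\mathcal{N}}_k}$ (identity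 factors outside $\mathcal{N}_k$), $\mathcal{X}_{\mathcal{N}}=\bigcup_k\mathcal{X}_{\mathcal{N}_k}$, and $\Phi_{\mathcal{N}}=\sum_{X_i\in\mathcal{X}_{\mathcal{N}}}\Phi_{X_i}$. *)

From HB Require Import structures.
From mathcomp Require Import all_boot all_order all_algebra.
Set Implicit Arguments. Unset Strict Implicit. Unset Printing Implicit Defensive.
Import Order.TTheory GRing.Theory Num.Theory.
Local Open Scope ring_scope.

Section QuasiLocal.
Variable C : numClosedFieldType.
Variable N : nat.
Variable d : 'I_N -> nat.   (* d a = dim H_a, sites a = 0..N-1 *)

(* computational basis configurations of H = ⊗_a H_a *)
Definition cfg := {dffun forall a : 'I_N, 'I_(d a)}.
(* linear operators on H, as matrices indexed by configurations *)
Definition op := cfg -> cfg -> C.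

Definition optrace (A : op) : C := \sum_(x : cfg) A x x.
Definition hermitian (A : op) : Prop := forall x y, A y x = (A x y)^*.
Definition psd (A : op) : Prop :=
  forall v : cfg -> C, 0 <= \sum_(x : cfg) \sum_(y : cfg) (v x)^* * A x y * v y.
Definition density (A : op) : Prop := [/\ hermitian A, psd A & optrace A = 1].

Definition glue (S : {set 'I_N}) (x z : cfg) : cfg :=
  [ffun a => if a \in S then x a else z a].

(* reduced operator rho_S = tr_{complement of S} rho, whose matrix entry
   <x_S| rho_S |y_S> is recorded at (x, y) (it depends only on x|_S, y|_S):
   sum over the complement configurations z|_{S^c}. *)
Definition reduced (S : {set 'I_N}) (A : op) : op := fun x y =>
  \sum_(z : cfg | [forall a, (a \in S) ==> (z a == x a)])
     A (glue S x z) (glue S y z).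

Definition adjmx n (M : 'M[C]_n) : 'M[C]_n := map_mx (fun z => z^*) M^T.

Variable B : forall a : 'I_N, 'I_(d a ^ 2) -> 'M[C]_(d a).

Definition local_onb (a : 'I_N) : Prop :=
  [/\ forall i : 'I_(d a ^ 2), val i = 0%N -> B i = (sqrtC ((d a)%:R))^-1 *: 1%:M,
      forall i : 'I_(d a ^ 2), val i <> 0%N -> \tr (B i) = 0,
      forall i : 'I_(d a ^ 2), adjmx (B i) = B i
    & forall i j : 'I_(d a ^ 2), \tr (adjmx (B i) *m B j) = (i == j)%:R].

Definition midx := {dffun forall a : 'I_N, 'I_(d a ^ 2)}.
Definition prodX (i : midx) : op := fun x y => \prod_(a : 'I_N) B (i a) (x a) (y a).

(* X_i belongs to X_{N_k}: identity factors outside N_k *)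
Definition in_nb (S : {set 'I_N}) (i : midx) : bool :=
  [forall a, (a \notin S) ==> (val (i a) == 0%N)].
Definition inXN (NS : {set {set 'I_N}}) (i : midx) : bool :=
  [exists S in NS, in_nb S i].

Definition trmul (X M : op) : C := \sum_(x : cfg) \sum_(y : cfg) X x y * M y x.

Definition PhiN (NS : {set {set 'I_N}}) (M : op) : op := fun x y =>
  \sum_(i : midx | inXN NS i) trmul (prodX i) M * prodX i x y.

End QuasiLocal.

Definition neighborhood_structure N (NS : {set {set 'I_N}}) : Prop :=
  forall S, S \in NS -> S \proper [set: 'I_N].

Definition nontrivial_ns N (NS : {set {set 'I_N}}) : Prop :=
  (forall a : 'I_N, exists2 S, S \in NS & a \in S) /\
  (forall S, S \in NS -> exists2 S', S' \in NS & (S' != S) && (S :&: S' != set0)).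

From HB Require Import structures.
From mathcomp Require Import all_boot all_order all_algebra.
From Stdlib Require Import FunctionalExtensionality.
Set Implicit Arguments. Unset Strict Implicit. Unset Printing Implicit Defensive.
Import Order.TTheory GRing.Theory Num.Theory.
Local Open Scope ring_scope.

(* The product basis X is orthonormal and, having dim(H)^2 elements, complete:
   every operator M equals sum_j tr(X_j M) X_j.  Taking the partial trace of a
   basis element X_j over the complement of S gives zero unless X_j has
   identity factors outside S, so rho_S is determined by the coefficients
   tr(X_j rho) with X_j in X_S; conversely, pairing rho_S with X_i in X_S
   returns tr(X_i rho) times the nonzero constant prod_{a notin S} d_a.  Hence
   rho_S = sigma_S for all S in N iff rho and sigma have the same coefficients
   on X_N, which by orthonormality is exactly Phi_N(rho) = Phi_N(sigma). *)

Section DffunSums.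
Variables (R : comNzSemiRingType) (I : finType) (T_ : I -> finType).

Lemma sum_dffun_prod (F : forall i, T_ i -> R) :
  \sum_(t : {dffun forall i, T_ i}) \prod_i F i (t i) =
  \prod_i \sum_(k : T_ i) F i k.
Proof.
pose G i := [ffun k : T_ i => F i k].
rewrite (reindex (@dffun_of_fprod I T_)); last exact/onW_bij/dffun_of_fprod_bij.
transitivity (\sum_(t : fprod T_) \prod_(i in I) G i (t i)).
  by apply: eq_bigr => t _; apply: eq_bigr => i _; rewrite !ffunE.
rewrite big_fprod -(bigA_distr_big_dep _ (fun i => untag 0 (G i))).
apply: eq_bigr => i _.
by rewrite -(big_tag G); apply: eq_bigr => k _; rewrite ffunE.
Qed.

Lemma sum2_dffun_prod (F : forall i, T_ i -> T_ i -> R) :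
  \sum_(t : {dffun forall i, T_ i}) \sum_(s : {dffun forall i, T_ i})
    \prod_i F i (t i) (s i) =
  \prod_i \sum_(p : T_ i) \sum_(q : T_ i) F i p q.
Proof.
rewrite (eq_bigr (fun t : {dffun forall i, T_ i} =>
  \prod_i \sum_q F i (t i) q)) => [|t _];
  last exact: (sum_dffun_prod (fun i q => F i (t i) q)).
exact: (sum_dffun_prod (fun i p => \sum_q F i p q)).
Qed.

Lemma sum_dffun_on_prod (S : {set I}) (u : {dffun forall i, T_ i})
    (F : forall i, T_ i -> R) :
  \sum_(t : {dffun forall i, T_ i} | [forall i, (i \in S) ==> (t i == u i)])
    \prod_i F i (t i) =
  \prod_i (if i \in S then F i (u i) else \sum_(k : T_ i) F i k).
Proof.
pose G i (k : T_ i) := if i \in S then (k == u i)%:R * F i k else F i k.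
transitivity (\prod_i \sum_k G i k); last first.
  apply: eq_bigr => i _; rewrite /G; case: ifP => // iS.
  rewrite (bigD1 (u i)) //= eqxx mul1r big1 ?addr0 // => k /negbTE ->.
  by rewrite mul0r.
rewrite big_mkcond -sum_dffun_prod; apply: eq_bigr => t _.
case: forallP => [tS | /forallP/forallPn [i]].
  by apply: eq_bigr => i _; rewrite /G; case: ifP => // /(implyP (tS i))/eqP ->;
    rewrite eqxx mul1r.
rewrite negb_imply => /andP [iS tu].
by rewrite (bigD1 i) //= /G iS (negbTE tu) !mul0r.
Qed.

End DffunSums.

Lemma prod_nat_bool (R : comNzSemiRingType) (I : finType) (P : pred I) :
  \prod_i ((P i)%:R : R) = [forall i, P i]%:R.
Proof.
case: (boolP [forall i, P i]) => [/forallP P_all | /forallPn [i nPi]].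
  by rewrite big1 // => i _; rewrite P_all.
by rewrite (bigD1 i) //= (negbTE nPi) mul0r.
Qed.

Lemma sum2_mul_lincomb (R : comNzSemiRingType) (T1 T2 J : finType) (P : pred J)
    (f : T1 -> T2 -> R) (c : J -> R) (g : J -> T1 -> T2 -> R) :
  \sum_x \sum_y f x y * (\sum_(j | P j) c j * g j x y) =
  \sum_(j | P j) c j * \sum_x \sum_y f x y * g j x y.
Proof.
under eq_bigr do under eq_bigr do rewrite mulr_sumr.
under eq_bigr do rewrite exchange_big /=.
rewrite exchange_big /=; apply: eq_bigr => j _; rewrite mulr_sumr.
apply: eq_bigr => x _; rewrite mulr_sumr; apply: eq_bigr => y _.
by rewrite mulrCA.
Qed.

Lemma sum_scalar_mx_entries (R : nzSemiRingType) n (a : R) :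
  \sum_(p < n) \sum_(q < n) (a%:M : 'M_n) q p = \tr (a%:M : 'M_n).
Proof.
apply: eq_bigr => p _; rewrite (bigD1 p) //= big1 ?addr0 // => q qp.
by rewrite mxE (negbTE qp) mulr0n.
Qed.

Lemma sum_mxvec (R : nmodType) m n (f : 'I_(m * n) -> R) :
  \sum_k f k = \sum_(i < m) \sum_(j < n) f (mxvec_index i j).
Proof.
rewrite (reindex _ (curry_mxvec_bij _ _)) /= pair_bigA /=.
by apply: eq_bigr => -[i j].
Qed.

Lemma mxvec_index_eq m n (i i' : 'I_m) (j j' : 'I_n) :
  (mxvec_index i j == mxvec_index i' j') = (i == i') && (j == j').
Proof.
by rewrite /mxvec_index (inj_eq (@cast_ord_inj _ _ _)) (inj_eq enum_rank_inj).
Qed.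

Lemma mulmx1C_eqdim (R : comUnitRingType) m k (M : 'M[R]_(m, k)) (N : 'M[R]_(k, m)) :
  m = k -> M *m N = 1%:M -> N *m M = 1%:M.
Proof. by move=> e; subst m; apply: mulmx1C. Qed.

(* Orthonormality says the coordinate matrix of the family has a left inverse;
   being square, it is also a right inverse, which is the completeness relation. *)
Lemma hermitian_onb_complete (C : numClosedFieldType) n (E : 'I_(n ^ 2) -> 'M[C]_n) :
  (forall i, adjmx (E i) = E i) ->
  (forall i j, \tr (adjmx (E i) *m E j) = (i == j)%:R) ->
  forall p q p' q', \sum_i E i q p * E i p' q' = ((p == p') && (q == q'))%:R.
Proof.
move=> herm orth p q p' q'.
have orth' i j : \tr (E i *m E j) = (i == j)%:R by rewrite -orth herm.
pose M : 'M[C]_(n ^ 2, n * n) := \matrix_(i, k) mxvec (E i) 0 k.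
pose N : 'M[C]_(n * n, n ^ 2) := \matrix_(k, j) mxvec (E j)^T 0 k.
have MN : M *m N = 1%:M.
  apply/matrixP => i j; rewrite !mxE -orth' /mxtrace sum_mxvec.
  apply: eq_bigr => a _; rewrite mxE.
  by apply: eq_bigr => b _; rewrite !mxE !mxvecE mxE.
have := congr1 (fun A : 'M_(n * n) => A (mxvec_index p q) (mxvec_index p' q'))
  (mulmx1C_eqdim (esym (mulnn n)) MN).
rewrite /= !mxE mxvec_index_eq => <-.
by apply: eq_bigr => i _; rewrite !mxE !mxvecE mxE.
Qed.

Section ProductBasis.
Variables (C : numClosedFieldType) (N : nat) (d : 'I_N -> nat).
Variable B : forall a : 'I_N, 'I_(d a ^ 2) -> 'M[C]_(d a).
Hypothesis d_gt0 : forall a, (0 < d a)%N.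
Hypothesis onb : forall a, local_onb B a.

Local Notation X := (prodX B).

Lemma in_nb_out (S : {set 'I_N}) (i : midx d) a :
  in_nb S i -> a \notin S -> val (i a) = 0%N.
Proof. by move=> /forallP/(_ a)/implyP iS /iS/eqP. Qed.

Lemma prodX_complete (x y x' y' : cfg d) :
  \sum_(j : midx d) X j x y * X j x' y' = ((y == x') && (x == y'))%:R.
Proof.
rewrite /prodX; under eq_bigr do rewrite -big_split /=.
rewrite (sum_dffun_prod (fun a k => B k (x a) (y a) * B k (x' a) (y' a))).
under eq_bigr => a _.
  have [_ _ herm orth] := onb a.
  rewrite (hermitian_onb_complete herm orth (y a) (x a) (x' a) (y' a)).
  over.
rewrite prod_nat_bool; congr (nat_of_bool _)%:R.
apply/forallP/andP => [xy | [/eqP-> /eqP->] a]; last by rewrite !eqxx.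
by split; apply/eqP/ffunP => a; case/andP: (xy a) => /eqP ? /eqP ?.
Qed.

Lemma prodX_expansion (M : op C d) x y :
  M x y = \sum_(j : midx d) trmul (X j) M * X j x y.
Proof.
rewrite /trmul; under eq_bigr do rewrite mulr_suml.
rewrite exchange_big /=.
under eq_bigr do (under eq_bigr do rewrite mulr_suml; rewrite exchange_big /=).
under eq_bigr do (under eq_bigr do (under eq_bigr do rewrite mulrAC;
  rewrite -mulr_suml prodX_complete)).
rewrite (bigD1 y) //= (bigD1 x) //= !eqxx mul1r.
rewrite big1 ?addr0 => [|z /negbTE zx]; last by rewrite zx mul0r.
rewrite big1 ?addr0 // => z /negbTE zy; apply: big1 => w _.
by rewrite zy andbF mul0r.
Qed.

Lemma trmul_prodX (i j : midx d) : trmul (X i) (X j) = (i == j)%:R.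
Proof.
rewrite /trmul /prodX; under eq_bigr do under eq_bigr do rewrite -big_split /=.
rewrite (sum2_dffun_prod (fun a p q => B (i a) p q * B (j a) q p)).
rewrite (eq_bigr (fun a => (i a == j a)%:R)) => [|a _]; last first.
  have [_ _ herm orth] := onb a.
  by rewrite -orth herm; apply: eq_bigr => p _; rewrite mxE.
rewrite prod_nat_bool; congr (nat_of_bool _)%:R.
by apply/forallP/eqP => [ij | -> //]; apply/ffunP => a; apply/eqP.
Qed.

Lemma trace_B0 a (k : 'I_(d a ^ 2)) : val k = 0%N -> \tr (B k) = sqrtC (d a)%:R.
Proof.
have [B0 _ _ _] := onb a; move=> /B0 ->.
have sqrt_neq0 : sqrtC ((d a)%:R : C) != 0.
  by rewrite sqrtC_eq0 pnatr_eq0 -lt0n d_gt0.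
by rewrite mxtraceZ mxtrace1 -{2}(sqrtCK (d a)%:R) expr2 mulKf.
Qed.

Lemma reduced_prodX (S : {set 'I_N}) (j : midx d) (u v : cfg d) :
  reduced S (X j) u v =
  \prod_a (if a \in S then B (j a) (u a) (v a) else \tr (B (j a))).
Proof.
pose F a (k : 'I_(d a)) :=
  B (j a) (if a \in S then u a else k) (if a \in S then v a else k).
rewrite /reduced /prodX (eq_bigr (fun z : cfg d => \prod_a F a (z a))) => [|z _];
  last by apply: eq_bigr => a _; rewrite !ffunE.
rewrite sum_dffun_on_prod /F.
by apply: eq_bigr => a _; case: ifP => aS; rewrite aS.
Qed.

Lemma reduced_prodX_eq0 (S : {set 'I_N}) (j : midx d) (u v : cfg d) :
  ~~ in_nb S j -> reduced S (X j) u v = 0.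
Proof.
case/forallPn => a; rewrite negb_imply => /andP [aS /eqP ja].
have [_ traceless _ _] := onb a.
by rewrite reduced_prodX (bigD1 a) //= (negbTE aS) traceless // mul0r.
Qed.

Lemma reduced_expansion (S : {set 'I_N}) (M : op C d) (u v : cfg d) :
  reduced S M u v =
  \sum_(j | in_nb S j) trmul (X j) M * reduced S (X j) u v.
Proof.
rewrite {1}/reduced; under eq_bigr do rewrite prodX_expansion.
rewrite exchange_big [RHS]big_mkcond /=; apply: eq_bigr => j _.
case: ifP => [_ | /negbT jS]; first by rewrite /reduced mulr_sumr.
by rewrite -mulr_sumr -/(reduced S (X j) u v) reduced_prodX_eq0 // mulr0.
Qed.

Lemma pairing_prodX_reduced (S : {set 'I_N}) (i j : midx d) : in_nb S i ->
  \sum_u \sum_v X i v u * reduced S (X j) u v =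
  \prod_a (if a \in S then (i a == j a)%:R else sqrtC (d a)%:R * \tr (B (j a))).
Proof.
move=> iS.
pose F a (p q : 'I_(d a)) :=
  B (i a) q p * (if a \in S then B (j a) p q else \tr (B (j a))).
rewrite (eq_bigr (fun u : cfg d => \sum_(v : cfg d) \prod_a F a (u a) (v a)))
  => [|u _]; last by apply: eq_bigr => v _; rewrite reduced_prodX -big_split.
rewrite sum2_dffun_prod /F.
apply: eq_bigr => a _; case: ifP => aS.
  have [_ _ herm orth] := onb a.
  by rewrite exchange_big -orth herm; apply: eq_bigr => q _; rewrite mxE.
have [B0 _ _ _] := onb a.
have ia0 := in_nb_out iS (negbT aS).
under eq_bigr do rewrite -mulr_suml.
by rewrite -mulr_suml -(trace_B0 ia0) B0 // scalemx1 sum_scalar_mx_entries.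
Qed.

Lemma pairing_reduced (S : {set 'I_N}) (M : op C d) (i : midx d) : in_nb S i ->
  \sum_u \sum_v X i v u * reduced S M u v =
  trmul (X i) M * \prod_(a | a \notin S) (d a)%:R.
Proof.
move=> iS; under [LHS]eq_bigr do under eq_bigr do rewrite reduced_expansion.
rewrite sum2_mul_lincomb (bigD1 i) //= [X in _ + X]big1 ?addr0 => [|j /andP [jS ji]].
  rewrite pairing_prodX_reduced // [in RHS]big_mkcond; congr (_ * _).
  apply: eq_bigr => a _; rewrite eqxx; case: ifP => //= /negbT aS.
  by rewrite trace_B0 ?(in_nb_out iS) // -expr2 sqrtCK.
have /existsP [a ija] : [exists a, i a != j a].
  apply: contraR ji => /existsPn eq_ij; apply/eqP/ffunP => a.
  exact/esym/eqP/negbNE/eq_ij.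
have aS : a \in S.
  apply: contraR ija => aS; apply/eqP/val_inj.
  by rewrite (in_nb_out iS aS) (in_nb_out jS aS).
by rewrite pairing_prodX_reduced // (bigD1 a) //= aS (negbTE ija) mul0r mulr0.
Qed.

Lemma reduced_eq_coef (S : {set 'I_N}) (M M' : op C d) :
  reduced S M = reduced S M' <->
  (forall i, in_nb S i -> trmul (X i) M = trmul (X i) M').
Proof.
split => [eqMM' i iS | coefE].
  have dim_neq0 : \prod_(a | a \notin S) ((d a)%:R : C) != 0.
    by apply/prodf_neq0 => a _; rewrite pnatr_eq0 -lt0n d_gt0.
  apply: (mulIf dim_neq0).
  by rewrite -!pairing_reduced // eqMM'.
do 2 apply: functional_extensionality => ?.
by rewrite !reduced_expansion; apply: eq_bigr => j jS; rewrite coefE.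
Qed.

Lemma trmul_PhiN (NS : {set {set 'I_N}}) (M : op C d) (i : midx d) :
  inXN NS i -> trmul (X i) (PhiN B NS M) = trmul (X i) M.
Proof.
move=> iN; rewrite {1}/trmul /PhiN (sum2_mul_lincomb _ _ _ (fun j x y => X j y x)).
rewrite (bigD1 i) //= [X in _ + X]big1 ?addr0 => [|j /andP [_ ji]];
  rewrite -/(trmul _ _) trmul_prodX; first by rewrite eqxx mulr1.
by rewrite eq_sym (negbTE ji) mulr0.
Qed.

Lemma PhiN_eq_coef (NS : {set {set 'I_N}}) (M M' : op C d) :
  PhiN B NS M = PhiN B NS M' <->
  (forall i, inXN NS i -> trmul (X i) M = trmul (X i) M').
Proof.
split => [eqPhi i iN | coefE].
  by rewrite -(trmul_PhiN M iN) eqPhi trmul_PhiN.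
do 2 apply: functional_extensionality => ?.
by apply: eq_bigr => i iN; rewrite coefE.
Qed.

End ProductBasis.

Unset Implicit Arguments.

Theorem corollaryV1 (C : numClosedFieldType) (N : nat) (d : 'I_N -> nat)
  (B : forall a : 'I_N, 'I_(d a ^ 2) -> 'M[C]_(d a))
  (NS : {set {set 'I_N}}) (rho sigma : op C d) :
  (forall a, (0 < d a)%N) ->
  (forall a, local_onb B a) ->
  neighborhood_structure NS -> nontrivial_ns NS ->
  density rho -> density sigma ->
  (forall S, S \in NS -> reduced S rho = reduced S sigma) <->
  PhiN B NS sigma = PhiN B NS rho.
Proof.
move=> d_gt0 onb _ _ _ _; split => [eq_red | eq_Phi].
  apply/(PhiN_eq_coef onb) => i /existsP [S /andP [SNS iS]].
  apply/esym.
  exact: (reduced_eq_coef d_gt0 onb S rho sigma).1 (eq_red S SNS) i iS.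
move=> S SNS; apply/(reduced_eq_coef d_gt0 onb) => i iS.
have iN : inXN NS i by apply/existsP; exists S; rewrite SNS.
by apply/esym; apply: (PhiN_eq_coef onb NS sigma rho).1 eq_Phi i iN.
Qed.
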